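(* Let $\pi$ be a permutation of an ordinary set $[k]$ (all letters distinct). Then there exists a constant $e_\pi$ such that for all integers $n\geq1$ and $l\geq n$: (i) for every $\mu:[n]\to\mathbb N\setminus\{0\}$ with $\sum_{i=1}^n\mu(i)=l$, the number $s_\mu(\pi)$ of permutations of the multiset $\{1^{\mu(1)},\ldots,n^{\mu(n)}\}$ avoiding $\pi$ satisfies $s_\mu(\pi)\leq e_\pi^{\,l}$; and (ii) the number $w_{l,n}(\pi)$ of words of length $l$ over the alphabet $[n]$ avoiding $\pi$ satisfies $w_{l,n}(\pi)\leq e_\pi^{\,l}$.
   Context: A permutation of the multiset $\{1^{\mu(1)},\ldots,n^{\mu(n)}\}$ is a sequence of length $\sum_i\mu(i)$ in which each $i\in[n]$ appears exactly $\mu(i)$ times. A word of length $l$ over $[n]$ is any sequence in $[n]^l$. A sequence $\sigma$ avoids $\pi=\pi_1\cdots\pi_k$ if there are no indices $i_1<\cdots<i_k$ with $\sigma_{i_a}<\sigma_{i_b}\iff\pi_a<\pi_b$ and $\sigma_{i_a}=\sigma_{i_b}\iff\pi_a=\pi_b$ for all $a,b$. *)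

From mathcomp Require Import all_boot.
Set Implicit Arguments. Unset Strict Implicit. Unset Printing Implicit Defensive.

Definition order_iso (s p : seq nat) : bool :=
  (size s == size p) &&
  [forall a : 'I_(size p), forall b : 'I_(size p),
    ((nth 0 s a < nth 0 s b) == (nth 0 p a < nth 0 p b)) &&
    ((nth 0 s a == nth 0 s b) == (nth 0 p a == nth 0 p b))].

Definition contains (sigma p : seq nat) : bool :=
  [exists m : (size sigma).-tuple bool, order_iso (mask m sigma) p].

Definition avoids (sigma p : seq nat) : bool := ~~ contains sigma p.

(* A word of length l over [n] is encoded as an l-tuple of 'I_n, letter
   i : 'I_n standing for i+1 (a shift that does not affect patterns). *)
Definition word_seq n l (w : l.-tuple 'I_n) : seq nat := [seq (val i).+1 | i <- w].

Definition w_count (l n : nat) (p : seq nat) : nat :=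
  #|[set w : l.-tuple 'I_n | avoids (word_seq w) p ]|.

Definition s_count (n l : nat) (mu : 'I_n -> nat) (p : seq nat) : nat :=
  #|[set w : l.-tuple 'I_n |
       [forall i : 'I_n, count_mem i w == mu i] && avoids (word_seq w) p ]|.
Arguments s_count : clear implicits.
Arguments w_count : clear implicits.

From mathcomp Require Import all_boot fingroup perm zify.
Set Implicit Arguments. Unset Strict Implicit. Unset Printing Implicit Defensive.

(* Words avoiding a permutation pattern are counted through 0-1 matrices, the
   route of Marcus and Tardos' proof of the Stanley-Wilf conjecture.
   A word w of length l over [n] is the set of cells (w_i, i) of an N x N grid
   (N >= n, l), injectively, and an occurrence of the permutation matrix of pi
   in that set yields an occurrence of pi in w.  Hence w_{l,n}(pi), and a
   fortiori s_mu(pi), is at most the number of N x N cell sets avoiding pi.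
   That number is bounded by contracting an (b m) x (b m) grid into b x b
   blocks, b = k^2 + 2:
   - Marcus-Tardos: in an avoiding set few blocks meet k columns or k rows
     (pigeonhole over k-subsets of offsets), the others hold <= (k-1)^2 cells,
     so an avoiding N x N set has at most c_pi N cells when N = b^j;
   - Klazar: an avoiding set is a subset of the cells above its (avoiding)
     contraction, so #avoiders(b m) <= #avoiders(m) 2^(b^2 c_pi m), whence
     #avoiders(b^j) <= 2^(C b^j).
   Choosing N = b^j with l <= N <= b l gives the bound e^l, e = 2^(C b). *)

Lemma card_le_fibres (T U : finType) (f : T -> U) (A : {set T}) c :
  (forall y, y \in f @: A -> #|[set x in A | f x == y]| <= c) ->
  #|A| <= #|f @: A| * c.
Proof.
move=> hfib; rewrite -sum1_card (partition_big_imset f) /= -sum_nat_const.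
by apply: leq_sum => y /hfib; rewrite sum1dep_card.
Qed.

Lemma exists_subset_card (T : finType) (A : {set T}) k :
  k <= #|A| -> exists2 K : {set T}, K \subset A & #|K| = k.
Proof.
elim: k => [|k IH] hk; first by exists set0; rewrite ?sub0set ?cards0.
have [K KA cK] := IH (ltnW hk).
have /properP[_ [x xA xK]] : K \proper A by rewrite properEcard KA cK.
by exists (x |: K); rewrite ?subUset ?sub1set ?xA ?KA // cardsU1 xK cK.
Qed.

Lemma card_family_pigeonhole (T U : finType) (W : {set T}) (h : T -> {set U}) k :
  (forall x, x \in W -> k <= #|h x|) ->
  (forall K : {set U}, #|K| = k -> #|[set x in W | K \subset h x]| < k) ->
  #|W| <= 'C(#|U|, k) * (k - 1).
Proof.
move=> hbig hfew.
pose g (x : T) := odflt set0 [pick K : {set U} | (K \subset h x) && (#|K| == k)].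
have gP x : x \in W -> g x \subset h x /\ #|g x| = k.
  move=> xW; rewrite /g; case: pickP => [K /andP[? /eqP] // | none].
  by have [K KA cK] := exists_subset_card (hbig x xW); have := none K; rewrite KA cK eqxx.
have fibres K : K \in g @: W -> #|[set x in W | g x == K]| <= k - 1.
  case/imsetP=> x xW ->; have lt_k := hfew _ (gP x xW).2.
  suff : #|[set y in W | g y == g x]| <= #|[set y in W | g x \subset h y]| by lia.
  apply: subset_leq_card; apply/subsetP => y; rewrite !inE => /andP[yW /eqP <-].
  by rewrite yW (gP y yW).1.
apply: leq_trans (card_le_fibres fibres) _.
rewrite leq_mul2r -card_draws; apply/orP; right; apply: subset_leq_card.
by apply/subsetP => _ /imsetP[x xW ->]; rewrite inE (gP x xW).2.
Qed.

Lemma increasing_in_set M (A : {set 'I_M}) k : k <= #|A| ->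
  exists R : 'I_k -> 'I_M, {homo R : i j / i < j} /\ forall i, R i \in A.
Proof.
move=> hk; exists (fun i => enum_val (widen_ord hk i)).
split=> [i j lij|i]; last exact: enum_valP.
have sorted_A : sorted (relpre val ltn) (enum A).
  rewrite -deprecated_filter_index_enum.
  apply: sorted_filter; first by move=> x y z /=; apply: ltn_trans.
  by rewrite -sorted_map /index_enum -enumT val_enum_ord iota_ltn_sorted.
pose x0 := enum_val (widen_ord hk i).
rewrite (enum_val_nth x0) (enum_val_nth x0 (widen_ord _ j)).
apply: (sorted_ltn_nth _ _ sorted_A) => //=; first by move=> x y z /=; apply: ltn_trans.
  by rewrite inE -cardE (leq_trans (ltn_ord i)).
by rewrite inE -cardE (leq_trans (ltn_ord j)).
Qed.

(* A 0-1 matrix of size N, represented by its set of (row, column) cells. *)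
Local Notation cells N := {set 'I_N * 'I_N}.

Section PermutationMatrices.
Variable k : nat.

(* f is strictly increasing (boolean form, so that containment is decidable). *)
Definition increasing N (f : {ffun 'I_k -> 'I_N}) : bool :=
  [forall i : 'I_k, forall j : 'I_k, (i < j) ==> (f i < f j)].

Definition contains_perm (sg : {perm 'I_k}) N (S : cells N) : bool :=
  [exists r : {ffun 'I_k -> 'I_N}, exists c : {ffun 'I_k -> 'I_N},
     [&& increasing r, increasing c & [forall j, (r (sg j), c j) \in S]]].

Lemma contains_permP (sg : {perm 'I_k}) N (S : cells N) :
  reflect (exists r c : 'I_k -> 'I_N,
             [/\ {homo r : i j / i < j}, {homo c : i j / i < j} &
                 forall j, (r (sg j), c j) \in S])
          (contains_perm sg S).
Proof.
have incP (f : 'I_k -> 'I_N) : reflect {homo f : i j / i < j} (increasing [ffun i => f i]).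
  apply: (iffP forallP) => [inc i j lij | inc i]; last first.
    by apply/forallP => j; rewrite !ffunE; apply/implyP/inc.
  by have /forallP/(_ j)/implyP := inc i; rewrite !ffunE; apply.
apply: (iffP existsP) => [[r /existsP[c /and3P[hr hc /forallP hS]]] | [r [c [hr hc hS]]]].
  by exists r, c; split=> //; apply/incP; rewrite ffunK.
exists [ffun i => r i]; apply/existsP; exists [ffun j => c j].
by rewrite (introT (incP _) hr) (introT (incP _) hc); apply/forallP => j; rewrite !ffunE.
Qed.

(* An occurrence seen through non-decreasing coordinate maps rho, gam is an
   occurrence: distinct images of rows (columns) come from distinct rows. *)
Lemma contains_perm_lift (sg : {perm 'I_k}) N (S : cells N)
    (rho gam : nat -> nat) (R C : 'I_k -> nat) :
  {homo rho : x y / x <= y} -> {homo gam : x y / x <= y} ->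
  {homo R : i j / i < j} -> {homo C : i j / i < j} ->
  (forall j, exists2 p, p \in S & (rho p.1 == R (sg j)) && (gam p.2 == C j)) ->
  contains_perm sg S.
Proof.
have reflect_lt (f : nat -> nat) x y : {homo f : x y / x <= y} -> f x < f y -> x < y.
  by move=> hf; apply: contraTT; rewrite -!leqNgt; apply: hf.
move=> hrho hgam hR hC realised.
have {}realised j : exists p, [&& p \in S, rho p.1 == R (sg j) & gam p.2 == C j].
  by have [p pS hp] := realised j; exists p; rewrite pS.
pose P j := xchoose (realised j).
have PP j : [&& P j \in S, rho (P j).1 == R (sg j) & gam (P j).2 == C j].
  exact: xchooseP (realised j).
apply/contains_permP; exists (fun i => (P ((sg^-1)%g i)).1), (fun j => (P j).2); split.
- move=> i j lij; apply: (reflect_lt rho) => //.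
  have /and3P[_ /eqP -> _] := PP ((sg^-1)%g i); have /and3P[_ /eqP -> _] := PP ((sg^-1)%g j).
  by rewrite !permKV hR.
- move=> i j lij; apply: (reflect_lt gam) => //.
  by have /and3P[_ _ /eqP ->] := PP i; have /and3P[_ _ /eqP ->] := PP j; rewrite hC.
- by move=> j; rewrite permK -surjective_pairing; case/and3P: (PP j).
Qed.

Definition transpose N (S : cells N) : cells N := [set (p.2, p.1) | p in S].

Lemma contains_perm_transpose (sg : {perm 'I_k}) N (S : cells N) :
  contains_perm (sg^-1)%g (transpose S) -> contains_perm sg S.
Proof.
case/contains_permP=> r [c [hr hc hS]]; apply/contains_permP; exists c, r; split=> // j.
by move: (hS (sg j)); rewrite permK => /imsetP[p pS [-> ->]]; rewrite -surjective_pairing.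
Qed.

End PermutationMatrices.

Definition avoiders k (sg : {perm 'I_k}) N : {set cells N} :=
  [set S : cells N | ~~ contains_perm sg S].

Section Contraction.
Variables (k b m : nat).
Hypothesis b_gt0 : 0 < b.

Lemma blockdiv_subproof (x : 'I_(b * m)) : x %/ b < m.
Proof. by rewrite ltn_divLR // [m * b]mulnC. Qed.

Definition blockdiv (x : 'I_(b * m)) : 'I_m := Ordinal (blockdiv_subproof x).
Definition blockmod (x : 'I_(b * m)) : 'I_b := Ordinal (ltn_pmod x b_gt0).
Definition blockof (p : 'I_(b * m) * 'I_(b * m)) : 'I_m * 'I_m :=
  (blockdiv p.1, blockdiv p.2).
Definition contract (S : cells (b * m)) : cells m := blockof @: S.
Definition block (S : cells (b * m)) B := [set p in S | blockof p == B].
Definition block_rows (S : cells (b * m)) B : {set 'I_b} :=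
  [set blockmod p.1 | p in block S B].
Definition block_cols (S : cells (b * m)) B : {set 'I_b} :=
  [set blockmod p.2 | p in block S B].

Lemma contains_contract (sg : {perm 'I_k}) S :
  contains_perm sg (contract S) -> contains_perm sg S.
Proof.
case/contains_permP=> r [c [hr hc hS]].
apply: (@contains_perm_lift _ _ _ _ (divn^~ b) (divn^~ b) (fun i => r i) (fun j => c j)) => //.
- by move=> x y; apply: leq_div2r.
- by move=> x y; apply: leq_div2r.
move=> j; have /imsetP[p pS] := hS j.
by rewrite /blockof => -[-> ->]; exists p; rewrite ?eqxx.
Qed.

Lemma card_block (S : cells (b * m)) (B : 'I_m * 'I_m) :
  #|block S B| <= #|block_rows S B| * #|block_cols S B|.
Proof.
rewrite -cardsX -(@card_in_imset _ _ (fun p => (blockmod p.1, blockmod p.2))).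
  apply: subset_leq_card; apply/subsetP => _ /imsetP[p pB ->].
  by rewrite inE; apply/andP; split; apply: imset_f.
move=> [p1 p2] [q1 q2]; rewrite !inE => /andP[_ /eqP <-] /andP[_ /eqP [e1 e2]] [f1 f2].
have divmod_eq (x y : nat) : x %/ b = y %/ b -> x = y %[mod b] -> x = y.
  by move=> dxy mxy; rewrite (divn_eq x b) (divn_eq y b) dxy mxy.
by congr pair; apply: val_inj; apply: divmod_eq.
Qed.

Lemma card_block_le (S : cells (b * m)) (B : 'I_m * 'I_m) : #|block S B| <= b * b.
Proof.
apply: leq_trans (card_block S B) _.
by apply: leq_mul; rewrite (leq_trans (max_card _)) ?card_ord.
Qed.

Lemma card_le_contract (S : cells (b * m)) : #|S| <= #|contract S| * (b * b).
Proof. by apply: card_le_fibres => B _; apply: card_block_le. Qed.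

Lemma card_as_block_sum (S : cells (b * m)) :
  #|S| = \sum_(B in contract S) #|block S B|.
Proof.
rewrite -sum1_card (partition_big_imset blockof).
by apply: eq_bigr => B _; rewrite sum1dep_card.
Qed.

(* In one block-column, fewer than k blocks share any k-set of offset columns;
   otherwise k of them, in distinct block-rows, carry the pattern. *)
Lemma wide_blocks_in_column (sg : {perm 'I_k}) (S : cells (b * m)) (Y : 'I_m) :
  ~~ contains_perm sg S ->
  #|[set B in contract S | (B.2 == Y) && (k <= #|block_cols S B|)]| <= 'C(b, k) * (k - 1).
Proof.
move=> avoid; rewrite -[b in 'C(b, _)]card_ord.
apply: (card_family_pigeonhole (h := block_cols S)) => [B | K cardK].
  by rewrite inE => /and3P[].
rewrite ltnNge; apply: contra avoid => many.
set F := [set B in _ | K \subset block_cols S B] in many.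
have rowsF : k <= #|[set B.1 | B in F]|.
  rewrite card_in_imset // => -[x1 x2] [y1 y2]; rewrite !inE /=.
  by move=> /andP[/and3P[_ /eqP -> _] _] /andP[/and3P[_ /eqP -> _] _] ->.
have [R [hR RF]] := increasing_in_set rowsF.
have [C [hC CK]] := increasing_in_set (eq_leq (esym cardK)).
apply: (@contains_perm_lift _ _ _ _ (divn^~ b) id (fun i => R i) (fun j => Y * b + C j)) => //.
- by move=> x y; apply: leq_div2r.
- by move=> i j lij; rewrite ltn_add2l hC.
move=> j; have /imsetP[B BF ->] := RF (sg j).
move: BF; rewrite !inE => /andP[/and3P[_ /eqP BY _] KB].
have /imsetP[p /[!inE] /andP[pS /eqP pB] ->] := subsetP KB _ (CK j).
by exists p => //; rewrite -BY -pB /= -divn_eq !eqxx.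
Qed.

Lemma wide_blocks (sg : {perm 'I_k}) (S : cells (b * m)) : ~~ contains_perm sg S ->
  #|[set B in contract S | k <= #|block_cols S B|]| <= m * ('C(b, k) * (k - 1)).
Proof.
move=> avoid; apply: leq_trans (card_le_fibres (f := snd) _) _ => [Y _ | ].
  apply: leq_trans (wide_blocks_in_column Y avoid); apply: subset_leq_card.
  by apply/subsetP => B; rewrite !inE => /andP[/andP[-> ->] ->].
by rewrite leq_mul2r (leq_trans (max_card _)) ?card_ord ?orbT.
Qed.

(* The same bound for blocks meeting k rows, by transposition. *)
Lemma tall_blocks (sg : {perm 'I_k}) (S : cells (b * m)) : ~~ contains_perm sg S ->
  #|[set B in contract S | k <= #|block_rows S B|]| <= m * ('C(b, k) * (k - 1)).
Proof.
move=> avoid; have avoidT : ~~ contains_perm (sg^-1)%g (transpose S).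
  by apply: contra avoid; apply: contains_perm_transpose.
apply: leq_trans (wide_blocks avoidT).
pose swap (B : 'I_m * 'I_m) := (B.2, B.1).
have swapK : involutive swap by case.
rewrite -(card_imset _ (inv_inj swapK)); apply: subset_leq_card.
apply/subsetP => _ /imsetP[B /[!inE] /andP[/imsetP[p pS ->] tall] ->].
have swap_in (q : 'I_(b * m) * 'I_(b * m)) : q \in S -> (q.2, q.1) \in transpose S.
  exact: (imset_f (fun q => (q.2, q.1))).
apply/andP; split; first by apply/imsetP; exists (p.2, p.1); rewrite ?swap_in.
apply: leq_trans tall _; apply: subset_leq_card; apply/subsetP => _ /imsetP[q qB ->].
move: qB; rewrite !inE => /andP[qS /eqP qp].
by apply/imsetP; exists (q.2, q.1); rewrite // inE swap_in //= -qp.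
Qed.

(* Marcus-Tardos recursion: wide or tall blocks contribute at most b^2 each,
   the remaining blocks of the contraction at most (k-1)^2 each. *)
Lemma marcus_tardos_step (sg : {perm 'I_k}) (S : cells (b * m)) : ~~ contains_perm sg S ->
  #|S| <= 2 * (m * ('C(b, k) * (k - 1))) * (b * b) + #|contract S| * ((k - 1) * (k - 1)).
Proof.
move=> avoid; have below_pred x : x < k -> x <= k - 1 by lia.
set wide := [set B in contract S | k <= #|block_cols S B|].
set tall := [set B in contract S | k <= #|block_rows S B|].
rewrite card_as_block_sum (bigID (mem (wide :|: tall))) /=; apply: leq_add.
  rewrite (eq_bigl (mem (wide :|: tall))) => [|B]; last first.
    by rewrite !inE; case: (B \in contract S).
  apply: (@leq_trans (\sum_(B in wide :|: tall) b * b)).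
    by apply: leq_sum => B _; apply: card_block_le.
  rewrite sum_nat_const leq_mul2r (leq_trans (leq_card_setU _ _)) ?orbT //.
  by rewrite mul2n -addnn leq_add ?(wide_blocks avoid) ?(tall_blocks avoid).
apply: leq_trans (_ : \sum_(B in contract S) (k - 1) * (k - 1) <= _).
  2: by rewrite sum_nat_const.
apply: leq_trans (_ : \sum_(B in contract S | B \notin wide :|: tall) (k - 1) * (k - 1) <= _).
  apply: leq_sum => B /andP[BS].
  rewrite !inE BS /= negb_or -!ltnNge => /andP[few_cols few_rows].
  by apply: leq_trans (card_block S B) _; rewrite leq_mul ?below_pred.
by rewrite [X in _ <= X](bigID (mem (wide :|: tall))) /= leq_addl.
Qed.

Lemma avoiders_contract (sg : {perm 'I_k}) (S : cells (b * m)) :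
  S \in avoiders sg (b * m) -> contract S \in avoiders sg m.
Proof. by rewrite !inE; apply: contra; apply: contains_contract. Qed.

(* Klazar's recursion: an avoider is a subset of the cells above its
   contraction, which is an avoider of size at most E. *)
Lemma klazar_step (sg : {perm 'I_k}) E :
  (forall S, S \in avoiders sg m -> #|S| <= E) ->
  #|avoiders sg (b * m)| <= #|avoiders sg m| * 2 ^ (E * (b * b)).
Proof.
move=> sparse.
apply: leq_trans (card_le_fibres (f := contract) (c := 2 ^ (E * (b * b))) _) _
  => [_ /imsetP[S0 S0av ->] | ].
  have T_av := avoiders_contract S0av.
  apply: leq_trans (_ : #|powerset (blockof @^-1: contract S0)| <= _).
    apply: subset_leq_card; apply/subsetP => S; rewrite !inE => /andP[_ /eqP <-].
    by apply/subsetP => p pS; rewrite inE imset_f.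
  rewrite card_powerset leq_exp2l //; apply: leq_trans (card_le_contract _) _.
  rewrite leq_mul2r; apply/orP; right; apply: leq_trans (sparse _ T_av).
  by apply: subset_leq_card; apply/subsetP => _ /imsetP[p /[!inE] pT ->].
rewrite leq_mul2r; apply/orP; right; apply: subset_leq_card.
by apply/subsetP => _ /imsetP[S Sav ->]; apply: avoiders_contract.
Qed.

End Contraction.

(* b^j, defined so that grid_size b j.+1 is convertibly b * grid_size b j. *)
Definition grid_size b j := iter j (muln b) 1.

Lemma grid_sizeE b j : grid_size b j = b ^ j.
Proof. by rewrite /grid_size iter_muln muln1. Qed.

Section AvoiderCount.
Variables (k : nat) (sg : {perm 'I_k}).

(* b = k^2 + 2 exceeds (k-1)^2, which makes the recursion linear. *)
Definition block_size := k * k + 2.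

(* The Marcus-Tardos constant: avoiding b^j x b^j sets have at most
   density * b^j cells. *)
Definition density :=
  2 * ('C(block_size, k) * (k - 1)) * (block_size * block_size) + 1.

Lemma block_size_gt1 : 1 < block_size.
Proof. by rewrite /block_size addn2. Qed.

Lemma avoider_card_le j (S : cells (grid_size block_size j)) :
  ~~ contains_perm sg S -> #|S| <= density * grid_size block_size j.
Proof.
have b_gt0 : 0 < block_size by rewrite ltnW // block_size_gt1.
elim: j S => [|j IH] S avoid.
  by rewrite (leq_trans (max_card _)) // card_prod card_ord /= /density !muln1 addn1.
have := @marcus_tardos_step k _ (grid_size block_size j) b_gt0 sg S avoid.
have := IH _ (contra (@contains_contract _ _ (grid_size block_size j) b_gt0 sg S) avoid).
have big_block : (k - 1) * (k - 1) + 1 <= block_size by rewrite /block_size; lia.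
rewrite /= /density; set X := 'C(_, _) * _; set M := grid_size _ j.
set C := #|contract _ _|; nia.
Qed.

Lemma card_avoiders j :
  #|avoiders sg (grid_size block_size j)|
    <= 2 ^ (density * (block_size * block_size) * grid_size block_size j).
Proof.
have b_gt0 : 0 < block_size by rewrite ltnW // block_size_gt1.
elim: j => [|j IH].
  apply: leq_trans (_ : #|powerset [set: 'I_1 * 'I_1]| <= _).
    by apply: subset_leq_card; apply/subsetP => S _; rewrite inE subsetT.
  rewrite card_powerset cardsT card_prod card_ord /= leq_exp2l // /density.
  by have := block_size_gt1; set C := 'C(_, _); nia.
apply: leq_trans (klazar_step b_gt0 (E := density * grid_size block_size j) _) _.
  by move=> S; rewrite inE; apply: avoider_card_le.
apply: leq_trans (leq_mul IH (leqnn _)) _.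
rewrite -expnD leq_exp2l //= -/(grid_size block_size j).
have := block_size_gt1; set M := grid_size _ j; set Q := block_size * block_size; nia.
Qed.

End AvoiderCount.

Lemma mask_increasing (T : Type) (x0 : T) (s : seq T) k (c : 'I_k -> nat) :
  {homo c : i j / i < j} -> (forall j, c j < size s) ->
  exists ms : (size s).-tuple bool, mask ms s = [seq nth x0 s (c j) | j <- enum 'I_k].
Proof.
move=> hc c_lt; set cs := [seq c j | j <- enum 'I_k].
have size_ms : size [seq i \in cs | i <- iota 0 (size s)] == size s.
  by rewrite size_map size_iota.
exists (Tuple size_ms).
have mask_iota : mask (Tuple size_ms) (iota 0 (size s)) = cs.
  rewrite /= -filter_mask; apply: (@irr_sorted_eq _ ltn); [exact: ltn_trans | exact: ltnn | | |].
  - by apply: sorted_filter; [exact: ltn_trans | exact: iota_ltn_sorted].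
  - rewrite sorted_map; apply: (@sub_sorted _ (relpre val ltn)); first by move=> x y /hc.
    by rewrite -sorted_map val_enum_ord iota_ltn_sorted.
  - move=> x; rewrite mem_filter mem_iota /= add0n andbC.
    by case/boolP: (x \in cs) => [/mapP[j _ ->]|]; rewrite ?c_lt ?andbF.
by rewrite -[X in mask _ X](mkseq_nth x0 s) /mkseq -map_mask mask_iota -map_comp.
Qed.

Lemma increasing_cmp k (r : 'I_k -> nat) : {homo r : i j / i < j} ->
  forall i j, ((r i < r j) = (i < j)) * ((r i == r j) = (i == j)).
Proof.
move=> hr i j; rewrite -[i == j]/(val i == val j).
case: (ltngtP i j) => [lt_ij | lt_ji | /val_inj ->]; last by rewrite ltnn !eqxx.
- by rewrite hr // !ltn_eqF ?hr.
- by rewrite ltnNge ltnW ?hr // !gtn_eqF ?hr.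
Qed.

Lemma order_iso_increasing k (pi : seq nat) (sg : {perm 'I_k}) (r : 'I_k -> nat) :
  size pi = k -> (forall j : 'I_k, nth 0 pi j = (sg j).+1) -> {homo r : i j / i < j} ->
  order_iso [seq (r (sg j)).+1 | j <- enum 'I_k] pi.
Proof.
move=> size_pi pi_sg hr.
have nth_vals (x : 'I_k) : nth 0 [seq (r (sg j)).+1 | j <- enum 'I_k] x = (r (sg x)).+1.
  by rewrite (nth_map x) ?size_enum_ord // nth_ord_enum.
rewrite /order_iso size_map size_enum_ord size_pi eqxx /=.
apply/forallP => a; apply/forallP => b.
by rewrite !nth_vals !pi_sg !ltnS !eqSS !(increasing_cmp hr) !eqxx.
Qed.

Section WordMatrices.
Variables (n l N : nat) (n_le : n <= N) (l_le : l <= N).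

Definition word_cells (w : l.-tuple 'I_n) : cells N :=
  [set (widen_ord n_le (tnth w i), widen_ord l_le i) | i : 'I_l].

Lemma word_cells_inj : injective word_cells.
Proof.
move=> w w' same; apply: eq_from_tnth => i.
have : (widen_ord n_le (tnth w i), widen_ord l_le i) \in word_cells w'.
  by rewrite -same; apply: imset_f.
case/imsetP=> i' _ [same_letter same_pos].
have same_i : i = i' by apply: val_inj.
by move: same_letter; rewrite -same_i => /val_inj.
Qed.

Lemma word_cells_contains k (pi : seq nat) (sg : {perm 'I_k}) (w : l.-tuple 'I_n) :
  size pi = k -> (forall j : 'I_k, nth 0 pi j = (sg j).+1) ->
  contains_perm sg (word_cells w) -> contains (word_seq w) pi.
Proof.
move=> size_pi pi_sg /contains_permP[r [c [hr hc hS]]].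
have letter j : (c j < size (word_seq w)) && (nth 0 (word_seq w) (c j) == (r (sg j)).+1).
  have /imsetP[i _ [-> ->]] := hS j.
  rewrite /word_seq size_map size_tuple /= ltn_ord.
  by rewrite (nth_map (tnth w i)) ?size_tuple // -tnth_nth eqxx.
have [ms mask_w] := @mask_increasing _ 0 (word_seq w) k (fun j => c j) hc
  (fun j => proj1 (andP (letter j))).
apply/existsP; exists ms; rewrite mask_w.
rewrite (eq_map (fun j => eqP (proj2 (andP (letter j))))).
exact: (order_iso_increasing (r := fun i => val (r i)) size_pi pi_sg hr).
Qed.

End WordMatrices.

Lemma w_count_le_avoiders n l N k (pi : seq nat) (sg : {perm 'I_k}) :
  n <= N -> l <= N -> size pi = k -> (forall j : 'I_k, nth 0 pi j = (sg j).+1) ->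
  w_count l n pi <= #|avoiders sg N|.
Proof.
move=> n_le l_le size_pi pi_sg.
rewrite /w_count -(card_imset _ (word_cells_inj (n_le := n_le) (l_le := l_le))).
apply: subset_leq_card; apply/subsetP => _ /imsetP[w /[!inE] avoid ->].
by apply: contra avoid; apply: word_cells_contains.
Qed.

Lemma s_count_le_w_count n l (mu : 'I_n -> nat) (p : seq nat) :
  s_count n l mu p <= w_count l n p.
Proof. by apply: subset_leq_card; apply/subsetP => w; rewrite !inE => /andP[_ ->]. Qed.

Lemma perm_of_iota k (pi : seq nat) : perm_eq pi (iota 1 k) ->
  size pi = k /\ exists sg : {perm 'I_k}, forall j : 'I_k, nth 0 pi j = (sg j).+1.
Proof.
move=> pi_perm; have size_pi : size pi = k by rewrite (perm_size pi_perm) size_iota.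
have in_range (j : 'I_k) : 0 < nth 0 pi j <= k.
  have : nth 0 pi j \in iota 1 k by rewrite -(perm_mem pi_perm) mem_nth ?size_pi.
  by rewrite mem_iota add1n ltnS.
have val_lt (j : 'I_k) : (nth 0 pi j).-1 < k by have := in_range j; lia.
have val_inj : injective (fun j => Ordinal (val_lt j)).
  move=> x y /(congr1 val) /= same.
  have same_nth : nth 0 pi x = nth 0 pi y by have := in_range x; have := in_range y; lia.
  have pi_uniq : uniq pi by rewrite (perm_uniq pi_perm) iota_uniq.
  by apply: ord_inj; apply/eqP; rewrite -(nth_uniq 0 _ _ pi_uniq) ?size_pi // same_nth.
split=> //; exists (perm val_inj) => j; rewrite permE /=.
by have := in_range j; lia.
Qed.

Lemma up_log_pow_le p l : 1 < p -> 0 < l -> p ^ up_log p l <= p * l.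
Proof.
move=> p_gt1 l_gt0; case: (ltngtP l 1) => [|l_gt1 | ->]; first by lia.
  have /andP[pred_lt _] := up_log_bounds p_gt1 l_gt1.
  have : 0 < up_log p l by rewrite up_log_gt0 p_gt1 l_gt1.
  by case: (up_log p l) pred_lt => //= u lt_l _; rewrite expnS leq_mul2l ltnW ?orbT.
by rewrite up_log1 expn0 muln1 ltnW.
Qed.

Theorem corollary9 (k : nat) (pi : seq nat) (Hpi : perm_eq pi (iota 1 k)) :
  exists e : nat, forall n l : nat, 1 <= n -> n <= l ->
    (forall mu : 'I_n -> nat, (forall i, 0 < mu i) -> (\sum_(i < n) mu i) = l ->
       s_count n l mu pi <= e ^ l) /\
    w_count l n pi <= e ^ l.
Proof.
have [size_pi [sg pi_sg]] := perm_of_iota Hpi.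
set b := block_size k; set c := density k * (b * b).
exists (2 ^ (c * b)) => n l n_gt0 n_le_l.
set N := grid_size b (up_log b l).
have b_gt1 : 1 < b := block_size_gt1 k.
have l_le_N : l <= N by rewrite /N grid_sizeE up_logP.
have N_le : N <= b * l by rewrite /N grid_sizeE up_log_pow_le //; lia.
have words : w_count l n pi <= (2 ^ (c * b)) ^ l.
  have n_le_N : n <= N by apply: leq_trans l_le_N.
  apply: leq_trans (w_count_le_avoiders n_le_N l_le_N size_pi pi_sg) _.
  apply: leq_trans (card_avoiders sg (up_log b l)) _.
  by rewrite -expnM leq_exp2l // -/b -/c -/N -mulnA leq_mul2l N_le orbT.
by split=> [mu _ _|//]; apply: leq_trans words; apply: s_count_le_w_count.
Qed.
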